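(* Let $\mathcal C$ be a braided monoidal category satisfying properties (1), (3), (4* ), (5* ) and (10) below. Let $\mathcal F\colon\mathcal C\to\mathsf{Mon}(\mathcal C)$ be the left adjoint of the forgetful functor $U\colon\mathsf{Mon}(\mathcal C)\to\mathcal C$, with unit $\eta$. Let $J$ be a category and $T\colon J\to\mathsf{Mon}(\mathcal C)$ a functor, and suppose that the colimit $N:=\operatorname{colim} UT$ exists in $\mathcal C$, with colimiting cocone $\varphi_j\colon UTj\to N$. Then there exists a monoid homomorphism $\pi\colon\mathcal F N\to P$ which is an epimorphism in $\mathcal C$ such that the morphisms $\pi\,\eta_N\,\varphi_j\colon Tj\to P$ form a colimiting cocone of $T$ in $\mathsf{Mon}(\mathcal C)$.
   Context: $\mathsf{Mon}(\mathcal C)$ is the category of monoids in the monoidal category $\mathcal C$ and monoid homomorphisms. Properties: (1) $\mathcal C$ has all small limits. (3) $\mathcal C$ is (Epi, ExtrMono)-structured: every morphism $f$ factors as $f=i\pi$ with $\pi$ an epimorphism and $i$ an extremal monomorphism, and for every commutative square $g\pi=if$ with $\pi$ an epimorphism and $i$ an extremal monomorphism there is $t$ with $it=g$, $t\pi=f$ (a monomorphism $i$ is extremal if every factorization $i=f\pi$ with $\pi$ an epimorphism has $\pi$ an isomorphism). (4* ) $\mathcal C$ is cowellpowered (for every object the equivalence classes of epimorphisms out of it form a small set). (5* ) For every epimorphism $f$ and every object $M$, both $f\otimes\mathrm{id}_M$ and $\mathrm{id}_M\otimes f$ are epimorphisms. (10) The forgetful functor $\mathsf{Mon}(\mathcal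 C)\to\mathcal C$ has a left adjoint. *)

Set Implicit Arguments.
Unset Strict Implicit.
Set Universe Polymorphism.

Record Category@{o h} : Type := {
  Ob :> Type@{o};
  Hom : Ob -> Ob -> Type@{h};
  cid : forall a, Hom a a;
  comp : forall a b c, Hom b c -> Hom a b -> Hom a c;
  comp_id_l : forall a b (f : Hom a b), comp (cid b) f = f;
  comp_id_r : forall a b (f : Hom a b), comp f (cid a) = f;
  comp_assoc : forall a b c d (f : Hom c d) (g : Hom b c) (h : Hom a b),
      comp f (comp g h) = comp (comp f g) h
}.
Arguments Hom {C} : rename.
Arguments cid {C} a : rename.
Arguments comp {C a b c} : rename.
Notation "g ∘ f" := (comp g f) (at level 40, left associativity).

Section Basic.
Context {C : Category}.
Definition Epi {a b : Ob C} (f : Hom a b) : Prop :=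
  forall c (g h : Hom b c), g ∘ f = h ∘ f -> g = h.
Definition Mono {a b : Ob C} (f : Hom a b) : Prop :=
  forall c (g h : Hom c a), f ∘ g = f ∘ h -> g = h.
Definition IsIso {a b : Ob C} (f : Hom a b) : Prop :=
  exists g : Hom b a, g ∘ f = cid a /\ f ∘ g = cid b.
Definition ExtrMono {a b : Ob C} (i : Hom a b) : Prop :=
  Mono i /\ forall x (p : Hom a x) (f : Hom x b), i = f ∘ p -> Epi p -> IsIso p.
End Basic.

Definition EpiExtrMonoStructured (C : Category) : Prop :=
  (forall (a b : Ob C) (f : Hom a b),
      exists (x : Ob C) (p : Hom a x) (i : Hom x b),
        Epi p /\ ExtrMono i /\ f = i ∘ p) /\
  (forall (a b c d : Ob C) (p : Hom a b) (i : Hom c d) (f : Hom a c) (g : Hom b d),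
      Epi p -> ExtrMono i -> g ∘ p = i ∘ f ->
      exists t : Hom b c, i ∘ t = g /\ t ∘ p = f).

(* property (4* ): cowellpowered; "small" = of the size of the hom-types *)
Definition Cowellpowered@{o h} (C : Category@{o h}) : Prop :=
  forall X : Ob C,
    exists (I : Type@{h}) (Y : I -> Ob C) (e : forall i, Hom X (Y i)),
      (forall i, Epi (e i)) /\
      (forall (Z : Ob C) (f : Hom X Z), Epi f ->
         exists (i : I) (u : Hom (Y i) Z), IsIso u /\ u ∘ e i = f).

Record Functor (J C : Category) : Type := {
  fobj :> Ob J -> Ob C;
  fmap : forall j k, Hom j k -> Hom (fobj j) (fobj k);
  fmap_id : forall j, fmap (cid j) = cid (fobj j);
  fmap_comp : forall j k l (u : Hom k l) (v : Hom j k),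
      fmap (u ∘ v) = fmap u ∘ fmap v
}.
Arguments fmap {J C} F {j k} : rename.

Definition IsCone {J C : Category} (D : Functor J C) (L : Ob C)
  (p : forall j, Hom L (D j)) : Prop :=
  forall j k (u : Hom j k), fmap D u ∘ p j = p k.
Arguments IsCone {J C} D L p.

Definition IsLimit {J C : Category} (D : Functor J C) (L : Ob C)
  (p : forall j, Hom L (D j)) : Prop :=
  IsCone D L p /\
  forall (X : Ob C) (q : forall j, Hom X (D j)), IsCone D X q ->
    exists h : Hom X L, (forall j, p j ∘ h = q j) /\
      forall h' : Hom X L, (forall j, p j ∘ h' = q j) -> h' = h.

Definition IsCocone {J C : Category} (D : Functor J C) (N : Ob C)
  (phi : forall j, Hom (D j) N) : Prop :=
  forall j k (u : Hom j k), phi k ∘ fmap D u = phi j.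
Arguments IsCocone {J C} D N phi.

Definition IsColimit {J C : Category} (D : Functor J C) (N : Ob C)
  (phi : forall j, Hom (D j) N) : Prop :=
  IsCocone D N phi /\
  forall (X : Ob C) (q : forall j, Hom (D j) X), IsCocone D X q ->
    exists h : Hom N X, (forall j, h ∘ phi j = q j) /\
      forall h' : Hom N X, (forall j, h' ∘ phi j = q j) -> h' = h.

Arguments IsLimit {J C} D L p.
Arguments IsColimit {J C} D N phi.

(* property (1): all small limits (indexing categories of the size of
   the hom-types of C) *)
Definition HasSmallLimits@{o h} (C : Category@{o h}) : Prop :=
  forall (J : Category@{h h}) (D : Functor J C),
    exists (L : Ob C) (p : forall j, Hom L (D j)), IsLimit D L p.

Record Monoidal (C : Category) : Type := {
  tens : Ob C -> Ob C -> Ob C;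
  tmap : forall a b c d, Hom a b -> Hom c d -> Hom (tens a c) (tens b d);
  I0 : Ob C;
  alpha : forall a b c, Hom (tens (tens a b) c) (tens a (tens b c));
  alpha_inv : forall a b c, Hom (tens a (tens b c)) (tens (tens a b) c);
  lam : forall a, Hom (tens I0 a) a;
  lam_inv : forall a, Hom a (tens I0 a);
  rho : forall a, Hom (tens a I0) a;
  rho_inv : forall a, Hom a (tens a I0);
  tmap_id : forall a b, tmap (cid a) (cid b) = cid (tens a b);
  tmap_comp : forall a1 b1 c1 a2 b2 c2 (f1 : Hom b1 c1) (g1 : Hom a1 b1)
      (f2 : Hom b2 c2) (g2 : Hom a2 b2),
      tmap (f1 ∘ g1) (f2 ∘ g2) = tmap f1 f2 ∘ tmap g1 g2;
  alpha_iso1 : forall a b c, alpha_inv a b c ∘ alpha a b c = cid _;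
  alpha_iso2 : forall a b c, alpha a b c ∘ alpha_inv a b c = cid _;
  lam_iso1 : forall a, lam_inv a ∘ lam a = cid _;
  lam_iso2 : forall a, lam a ∘ lam_inv a = cid _;
  rho_iso1 : forall a, rho_inv a ∘ rho a = cid _;
  rho_iso2 : forall a, rho a ∘ rho_inv a = cid _;
  alpha_nat : forall a b c d e f (g : Hom a b) (h : Hom c d) (k : Hom e f),
      alpha b d f ∘ tmap (tmap g h) k = tmap g (tmap h k) ∘ alpha a c e;
  lam_nat : forall a b (f : Hom a b), lam b ∘ tmap (cid I0) f = f ∘ lam a;
  rho_nat : forall a b (f : Hom a b), rho b ∘ tmap f (cid I0) = f ∘ rho a;
  pentagon : forall a b c d,
      alpha a b (tens c d) ∘ alpha (tens a b) c d
      = tmap (cid a) (alpha b c d) ∘ alpha a (tens b c) d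
          ∘ tmap (alpha a b c) (cid d);
  triangle : forall a b,
      tmap (cid a) (lam b) ∘ alpha a I0 b = tmap (rho a) (cid b)
}.
Arguments tens {C} M : rename.
Arguments tmap {C} M {a b c d} : rename.
Arguments I0 {C} M : rename.
Arguments alpha {C} M a b c : rename.
Arguments alpha_inv {C} M a b c : rename.
Arguments lam {C} M a : rename.
Arguments rho {C} M a : rename.

Record Braided (C : Category) (M : Monoidal C) : Type := {
  braid : forall a b, Hom (tens M a b) (tens M b a);
  braid_inv : forall a b, Hom (tens M b a) (tens M a b);
  braid_iso1 : forall a b, braid_inv a b ∘ braid a b = cid _;
  braid_iso2 : forall a b, braid a b ∘ braid_inv a b = cid _;
  braid_nat : forall a b c d (f : Hom a b) (g : Hom c d),
      braid b d ∘ tmap M f g = tmap M g f ∘ braid a c;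
  hexagon1 : forall a b c,
      alpha M b c a ∘ braid a (tens M b c) ∘ alpha M a b c
      = tmap M (cid b) (braid a c) ∘ alpha M b a c ∘ tmap M (braid a b) (cid c);
  hexagon2 : forall a b c,
      alpha_inv M c a b ∘ braid (tens M a b) c ∘ alpha_inv M a b c
      = tmap M (braid a c) (cid b) ∘ alpha_inv M a c b ∘ tmap M (cid a) (braid b c)
}.

Definition TensorPreservesEpi {C : Category} (M : Monoidal C) : Prop :=
  forall (a b : Ob C) (f : Hom a b) (X : Ob C),
    Epi f -> Epi (tmap M f (cid X)) /\ Epi (tmap M (cid X) f).

Record Monoid {C : Category} (M : Monoidal C) : Type := {
  carrier :> Ob C;
  mult : Hom (tens M carrier carrier) carrier;
  unit_ : Hom (I0 M) carrier;
  mult_assoc : mult ∘ tmap M mult (cid carrier)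
               = mult ∘ tmap M (cid carrier) mult ∘ alpha M carrier carrier carrier;
  mult_unit_l : mult ∘ tmap M unit_ (cid carrier) = lam M carrier;
  mult_unit_r : mult ∘ tmap M (cid carrier) unit_ = rho M carrier
}.
Arguments carrier {C M} m : rename.
Arguments mult {C M} m : rename.
Arguments unit_ {C M} m : rename.

Definition IsMonHom {C : Category} {M : Monoidal C} (A B : Monoid M)
  (f : Hom (carrier A) (carrier B)) : Prop :=
  f ∘ mult A = mult B ∘ tmap M f f /\ f ∘ unit_ A = unit_ B.

Arguments IsMonHom {C M} A B f.

(* property (10), with its data: the left adjoint F of the forgetful functor
   Mon(C) -> C, given as a universal arrow eta_X : X -> U(F X) for each X. *)
Definition IsFreeMonoidFunctor {C : Category} {M : Monoidal C}
  (F : Ob C -> Monoid M) (eta : forall X, Hom X (carrier (F X))) : Prop :=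
  forall (X : Ob C) (B : Monoid M) (f : Hom X (carrier B)),
    exists g : Hom (carrier (F X)) (carrier B),
      (IsMonHom (F X) B g /\ g ∘ eta X = f) /\
      forall g', IsMonHom (F X) B g' /\ g' ∘ eta X = f -> g' = g.

Arguments IsFreeMonoidFunctor {C M} F eta.

Record MonDiagram (J C : Category) (M : Monoidal C) : Type := {
  Tobj :> Ob J -> Monoid M;
  Tmap : forall j k, Hom j k -> Hom (carrier (Tobj j)) (carrier (Tobj k));
  Tmap_hom : forall j k (u : Hom j k), IsMonHom (Tobj j) (Tobj k) (Tmap u);
  Tmap_id : forall j, Tmap (cid j) = cid _;
  Tmap_comp : forall j k l (u : Hom k l) (v : Hom j k),
      Tmap (u ∘ v) = Tmap u ∘ Tmap v
}.
Arguments Tmap {J C M} T {j k} : rename.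

Definition UT {J C : Category} {M : Monoidal C} (T : MonDiagram J M) : Functor J C :=
  {| fobj := fun j => carrier (T j);
     fmap := fun j k u => Tmap T u;
     fmap_id := Tmap_id T;
     fmap_comp := Tmap_comp T |}.

Definition IsMonColimit {J C : Category} {M : Monoidal C} (T : MonDiagram J M)
  (P : Monoid M) (psi : forall j, Hom (carrier (T j)) (carrier P)) : Prop :=
  ((forall j, IsMonHom (T j) P (psi j)) /\
   (forall j k (u : Hom j k), psi k ∘ Tmap T u = psi j)) /\
  forall (B : Monoid M) (chi : forall j, Hom (carrier (T j)) (carrier B)),
    (forall j, IsMonHom (T j) B (chi j)) ->
    (forall j k (u : Hom j k), chi k ∘ Tmap T u = chi j) ->
    exists h : Hom (carrier P) (carrier B),
      (IsMonHom P B h /\ forall j, h ∘ psi j = chi j) /\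
      forall h', (IsMonHom P B h' /\ forall j, h' ∘ psi j = chi j) -> h' = h.
Arguments IsMonColimit {J C M} T P psi.


(* The colimit is a quotient of the free monoid F N, namely the largest
   quotient p : F N -> P through which every monoid homomorphism g out of F N
   that makes all the maps eta_N phi_j homomorphisms factors.  Such a g factors
   through its (Epi, ExtrMono)-image, which inherits a multiplication by
   diagonal fill-in, as tensoring preserves epis; by cowellpoweredness these
   images form a set up to isomorphism, so F N maps into their product, and P
   is the image of F N there.  The monoid laws descend to P because p ⊗ p ⊗ p
   is epi, and the universal properties of F and of the colimit N turn the
   universal property of P into that of a colimit in Mon(C). *)

Set Universe Polymorphism.

Section CategoryFacts.
Context {C : Category}.

Lemma epi_comp {a b c : Ob C} (f : Hom a b) (g : Hom b c) :
  Epi f -> Epi g -> Epi (g ∘ f).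
Proof.
  intros Hf Hg x u v E. apply Hg, Hf. rewrite <- !comp_assoc. exact E.
Qed.

Lemma iso_mono {a b : Ob C} (f : Hom a b) : IsIso f -> Mono f.
Proof.
  intros [g [E1 _]] x u v E.
  rewrite <- (comp_id_l u), <- (comp_id_l v), <- E1, <- !comp_assoc, E.
  reflexivity.
Qed.

Definition JointlyMonic {L : Ob C} {K : Type} {Y : K -> Ob C}
  (pr : forall k, Hom L (Y k)) : Prop :=
  forall Z (h h' : Hom Z L), (forall k, pr k ∘ h = pr k ∘ h') -> h = h'.

End CategoryFacts.

(* Hom lives in Type@{u}, not Prop, so that this category is small in the
   sense of [HasSmallLimits]. *)
Definition discrete_category@{u} (I : Type@{u}) : Category@{u u}.
Proof.
  refine {| Ob := I; Hom := fun a b => a = b; cid := fun a => eq_refl;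
            comp := fun a b c g f => eq_trans f g |}.
  - intros a b f. apply eq_trans_refl_r.
  - intros a b f. apply eq_trans_refl_l.
  - intros a b c d f g h. symmetry. apply eq_trans_assoc.
Defined.

Definition discrete_diagram@{o u} {C : Category@{o u}} (I : Type@{u})
  (X : I -> Ob C) : Functor (discrete_category@{u} I) C.
Proof.
  refine (@Build_Functor (discrete_category I) C X
            (fun j k (e : j = k) =>
               match e in _ = k return Hom (X j) (X k) with eq_refl => cid _ end)
            _ _).
  - reflexivity.
  - intros j k l u v. simpl in *. destruct u, v. symmetry. apply comp_id_l.
Defined.

Lemma small_products@{o u} (C : Category@{o u}) : HasSmallLimits C ->
  forall (I : Type@{u}) (X : I -> Ob C),
  exists (L : Ob C) (pr : forall i, Hom L (X i)),
    (forall Z (f : forall i, Hom Z (X i)), exists h, forall i, pr i ∘ h = f i) /\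
    JointlyMonic pr.
Proof.
  intros limits I X.
  destruct (limits (discrete_category I) (discrete_diagram I X))
    as [L [pr [_ Huniv]]].
  assert (Hcone : forall Z (f : forall i, Hom Z (X i)),
             IsCone (discrete_diagram I X) Z f).
  { intros Z f j k u. simpl in u. destruct u. apply comp_id_l. }
  exists L, pr. split.
  - intros Z f. destruct (Huniv Z f (Hcone Z f)) as [h [Hh _]]. exists h. exact Hh.
  - intros Z h h' E.
    destruct (Huniv Z (fun i => pr i ∘ h) (Hcone _ _)) as [g [_ Hg]].
    rewrite (Hg h), (Hg h'); [reflexivity | |]; intro i; [symmetry; apply E | reflexivity].
Qed.

Section Multiplications.
Context {C : Category} (M : Monoidal C).
Hypothesis tens_epi : TensorPreservesEpi M.
Hypothesis structured : EpiExtrMonoStructured C.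

Lemma tmap_comp_l {a b c d e : Ob C} (f : Hom b c) (g : Hom a b) (h : Hom d e) :
  tmap M (f ∘ g) h = tmap M f h ∘ tmap M g (cid d).
Proof. rewrite <- tmap_comp, comp_id_r. reflexivity. Qed.

Lemma tmap_comp_r {a b c d e : Ob C} (f : Hom b c) (g : Hom a b) (h : Hom d e) :
  tmap M h (f ∘ g) = tmap M h f ∘ tmap M (cid d) g.
Proof. rewrite <- tmap_comp, comp_id_r. reflexivity. Qed.

Lemma tmap_epi {a b c d : Ob C} (f : Hom a b) (g : Hom c d) :
  Epi f -> Epi g -> Epi (tmap M f g).
Proof.
  intros Hf Hg.
  rewrite <- (comp_id_l f), <- (comp_id_r g), tmap_comp.
  apply epi_comp; [apply (tens_epi _ _ f c Hf) | apply (tens_epi _ _ g b Hg)].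
Qed.

Definition Multiplicative {a b : Ob C} (ma : Hom (tens M a a) a)
  (mb : Hom (tens M b b) b) (f : Hom a b) : Prop :=
  f ∘ ma = mb ∘ tmap M f f.

Lemma image_multiplication {a b x : Ob C} (ma : Hom (tens M a a) a)
  (mb : Hom (tens M b b) b) (p : Hom a x) (i : Hom x b) :
  Epi p -> ExtrMono i -> Multiplicative ma mb (i ∘ p) ->
  exists mx, Multiplicative ma mx p /\ Multiplicative mx mb i.
Proof.
  intros Hp Hi Hmul.
  destruct (proj2 structured _ _ _ _ (tmap M p p) i (p ∘ ma) (mb ∘ tmap M i i))
    as [mx [Hmx_i Hmx_p]].
  - apply tmap_epi; exact Hp.
  - exact Hi.
  - rewrite <- comp_assoc, <- tmap_comp, <- Hmul. symmetry. apply comp_assoc.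
  - exists mx. split; [symmetry; exact Hmx_p | exact Hmx_i].
Qed.

Section QuotientMonoid.
Variables (A : Monoid M) (X : Ob C) (p : Hom (carrier A) X)
  (m : Hom (tens M X X) X).
Hypotheses (p_epi : Epi p) (p_mul : Multiplicative (mult A) m p).

Lemma quotient_mult_assoc :
  m ∘ tmap M m (cid X) = m ∘ tmap M (cid X) m ∘ alpha M X X X.
Proof.
  apply (tmap_epi (tmap M p p) p (tmap_epi p p p_epi p_epi) p_epi).
  assert (Hl : tmap M m (cid X) ∘ tmap M (tmap M p p) p
               = tmap M p p ∘ tmap M (mult A) (cid A)).
  { rewrite <- !tmap_comp, <- p_mul, comp_id_l, comp_id_r. reflexivity. }
  assert (Hr : tmap M (cid X) m ∘ tmap M p (tmap M p p)
               = tmap M p p ∘ tmap M (cid A) (mult A)).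
  { rewrite <- !tmap_comp, <- p_mul, comp_id_l, comp_id_r. reflexivity. }
  rewrite <- !comp_assoc, alpha_nat, Hl, (comp_assoc (tmap M (cid X) m)), Hr.
  rewrite !comp_assoc, <- p_mul, <- !comp_assoc, mult_assoc, <- comp_assoc.
  reflexivity.
Qed.

Lemma quotient_mult_unit_l : m ∘ tmap M (p ∘ unit_ A) (cid X) = lam M X.
Proof.
  apply (proj2 (tens_epi _ _ p (I0 M) p_epi)).
  rewrite lam_nat, <- comp_assoc, <- tmap_comp, comp_id_l, comp_id_r,
    tmap_comp_l, comp_assoc, <- p_mul, <- comp_assoc, mult_unit_l.
  reflexivity.
Qed.

Lemma quotient_mult_unit_r : m ∘ tmap M (cid X) (p ∘ unit_ A) = rho M X.
Proof.
  apply (proj1 (tens_epi _ _ p (I0 M) p_epi)).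
  rewrite rho_nat, <- comp_assoc, <- tmap_comp, comp_id_l, comp_id_r,
    tmap_comp_r, comp_assoc, <- p_mul, <- comp_assoc, mult_unit_r.
  reflexivity.
Qed.

Definition quotient_monoid : Monoid M :=
  Build_Monoid quotient_mult_assoc quotient_mult_unit_l quotient_mult_unit_r.

Lemma quotient_monoid_hom : IsMonHom A quotient_monoid p.
Proof. split; [exact p_mul | reflexivity]. Qed.

End QuotientMonoid.

Lemma mon_hom_comp {A B D : Monoid M} (f : Hom (carrier A) (carrier B))
  (g : Hom (carrier B) (carrier D)) :
  IsMonHom A B f -> IsMonHom B D g -> IsMonHom A D (g ∘ f).
Proof.
  intros [Hf_mul Hf_unit] [Hg_mul Hg_unit]. split.
  - rewrite <- comp_assoc, Hf_mul, comp_assoc, Hg_mul, <- comp_assoc, <- tmap_comp.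
    reflexivity.
  - rewrite <- comp_assoc, Hf_unit. exact Hg_unit.
Qed.

Lemma mon_hom_of_comp_epi {A B D : Monoid M} (p : Hom (carrier A) (carrier B))
  (h : Hom (carrier B) (carrier D)) :
  IsMonHom A B p -> Epi p -> IsMonHom A D (h ∘ p) -> IsMonHom B D h.
Proof.
  intros [Hp_mul Hp_unit] Hp [Hhp_mul Hhp_unit]. split.
  - apply (tmap_epi p p Hp Hp).
    rewrite <- comp_assoc, <- Hp_mul, comp_assoc, Hhp_mul, <- comp_assoc, <- tmap_comp.
    reflexivity.
  - rewrite <- Hp_unit, comp_assoc. exact Hhp_unit.
Qed.

End Multiplications.

Section Relations.
Context {C : Category} (M : Monoidal C).
Hypothesis tens_epi : TensorPreservesEpi M.
Hypothesis structured : EpiExtrMonoStructured C.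
Hypothesis limits : HasSmallLimits C.
Hypothesis cowellpowered : Cowellpowered C.
Context {A : Ob C} (mA : Hom (tens M A A) A)
  {R : Type} {W : R -> Ob C} (x y : forall r, Hom (W r) A).

Definition Coequalizes {X : Ob C} (f : Hom A X) : Prop :=
  forall r, f ∘ x r = f ∘ y r.

Lemma coequalizes_mono_cancel {X Z : Ob C} (f : Hom A X) (i : Hom X Z) :
  Mono i -> Coequalizes (i ∘ f) -> Coequalizes f.
Proof. intros Hi Hf r. apply Hi. rewrite !comp_assoc. apply Hf. Qed.

Lemma coequalizes_jointly {L : Ob C} {K : Type} {Y : K -> Ob C}
  (pr : forall k, Hom L (Y k)) (f : Hom A L) :
  JointlyMonic pr -> (forall k, Coequalizes (pr k ∘ f)) -> Coequalizes f.
Proof. intros Hpr Hf r. apply Hpr. intro k. rewrite !comp_assoc. apply Hf. Qed.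

Definition Admissible {X : Ob C} (mX : Hom (tens M X X) X) (f : Hom A X) : Prop :=
  Multiplicative M mA mX f /\ Coequalizes f.

Lemma admissible_image {B X : Ob C} (mB : Hom (tens M B B) B)
  (p : Hom A X) (i : Hom X B) :
  Epi p -> ExtrMono i -> Admissible mB (i ∘ p) -> exists mX, Admissible mX p.
Proof.
  intros Hp Hi [Hmul Hco].
  destruct (image_multiplication M tens_epi structured mA mB p i Hp Hi Hmul)
    as [mX [HmX _]].
  exists mX. split; [exact HmX |].
  exact (coequalizes_mono_cancel p i (proj1 Hi) Hco).
Qed.

Lemma admissible_iso {X Y : Ob C} (mX : Hom (tens M X X) X)
  (p : Hom A X) (e : Hom A Y) (u : Hom Y X) :
  IsIso u -> u ∘ e = p -> Admissible mX p -> exists mY, Admissible mY e.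
Proof.
  intros Hu Hue [Hmul Hco].
  pose proof Hu as [v [Hvu _]].
  exists (v ∘ mX ∘ tmap M u u). split.
  - unfold Multiplicative.
    rewrite <- comp_assoc, <- tmap_comp, Hue, <- comp_assoc, <- Hmul, <- Hue,
      !comp_assoc, Hvu, comp_id_l.
    reflexivity.
  - apply (coequalizes_mono_cancel e u (iso_mono u Hu)). rewrite Hue. exact Hco.
Qed.

Lemma admissible_representative {I : Type} {Y : I -> Ob C}
  (e : forall k, Hom A (Y k))
  (e_rep : forall (Z : Ob C) (f : Hom A Z), Epi f ->
             exists k (u : Hom (Y k) Z), IsIso u /\ u ∘ e k = f)
  {B : Ob C} (mB : Hom (tens M B B) B) (g : Hom A B) :
  Admissible mB g ->
  exists k (mY : Hom (tens M (Y k) (Y k)) (Y k)) (h : Hom (Y k) B),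
    Admissible mY (e k) /\ h ∘ e k = g.
Proof.
  intros Hg.
  destruct (proj1 structured _ _ g) as [X [p [i [Hp [Hi Hgip]]]]].
  rewrite Hgip in Hg.
  destruct (admissible_image mB p i Hp Hi Hg) as [mX HmX].
  destruct (e_rep X p Hp) as [k [u [Hu Hue]]].
  destruct (admissible_iso mX p (e k) u Hu Hue HmX) as [mY HmY].
  exists k, mY, (i ∘ u). split; [exact HmY |].
  rewrite <- comp_assoc, Hue. symmetry. exact Hgip.
Qed.

Lemma weakly_initial_admissible :
  exists (L : Ob C) (mL : Hom (tens M L L) L) (q : Hom A L),
    Admissible mL q /\
    forall (B : Ob C) (mB : Hom (tens M B B) B) (g : Hom A B),
      Admissible mB g -> exists h, h ∘ q = g.
Proof.
  destruct (cowellpowered A) as [I [Y [e [_ e_rep]]]].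
  set (Idx := {k : I & {mY : Hom (tens M (Y k) (Y k)) (Y k) | Admissible mY (e k)}}).
  destruct (small_products C limits Idx (fun k => Y (projT1 k)))
    as [L [pr [pr_ex pr_mono]]].
  destruct (pr_ex A (fun k => e (projT1 k))) as [q Hq].
  destruct (pr_ex _ (fun k => proj1_sig (projT2 k) ∘ tmap M (pr k) (pr k)))
    as [mL HmL].
  exists L, mL, q. split; [split |].
  - apply pr_mono. intro k.
    rewrite !comp_assoc, Hq, HmL, <- comp_assoc, <- tmap_comp, Hq.
    exact (proj1 (proj2_sig (projT2 k))).
  - apply (coequalizes_jointly pr); [exact pr_mono |]. intro k.
    rewrite Hq. exact (proj2 (proj2_sig (projT2 k))).
  - intros B mB g Hg.
    destruct (admissible_representative e e_rep mB g Hg) as [k [mY [h [Hk Hh]]]].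
    set (idx := existT _ k (exist _ mY Hk) : Idx).
    exists (h ∘ pr idx).
    rewrite <- comp_assoc, <- Hh. exact (f_equal (fun f => h ∘ f) (Hq idx)).
Qed.

End Relations.

Section MonoidQuotient.
Context {C : Category} (M : Monoidal C).
Hypothesis tens_epi : TensorPreservesEpi M.
Hypothesis structured : EpiExtrMonoStructured C.
Hypothesis limits : HasSmallLimits C.
Hypothesis cowellpowered : Cowellpowered C.

Lemma monoid_quotient (A : Monoid M) {R : Type} {W : R -> Ob C}
  (x y : forall r, Hom (W r) (carrier A)) :
  exists (P : Monoid M) (p : Hom (carrier A) (carrier P)),
    IsMonHom A P p /\ Epi p /\ Coequalizes x y p /\
    forall (B : Monoid M) (g : Hom (carrier A) (carrier B)),
      IsMonHom A B g -> Coequalizes x y g ->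
      exists h, IsMonHom P B h /\ h ∘ p = g.
Proof.
  destruct (weakly_initial_admissible M tens_epi structured limits cowellpowered
              (mult A) x y) as [L [mL [q [Hq q_univ]]]].
  destruct (proj1 structured _ _ q) as [X [p [i [Hp [Hi Hqip]]]]].
  rewrite Hqip in Hq.
  destruct (admissible_image M tens_epi structured (mult A) x y mL p i Hp Hi Hq)
    as [m [Hm_mul Hm_co]].
  set (P := quotient_monoid M tens_epi A X p m Hp Hm_mul).
  pose proof (quotient_monoid_hom M tens_epi A X p m Hp Hm_mul : IsMonHom A P p)
    as Hp_hom.
  exists P, p. split; [exact Hp_hom |]. split; [exact Hp |]. split; [exact Hm_co |].
  intros B g Hg Hg_co.
  destruct (q_univ B (mult B) g (conj (proj1 Hg) Hg_co)) as [h Hh].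
  rewrite Hqip, comp_assoc in Hh.
  exists (h ∘ i). split; [| exact Hh].
  apply (mon_hom_of_comp_epi M tens_epi (B := P) p); [exact Hp_hom | exact Hp |].
  rewrite <- Hh in Hg. exact Hg.
Qed.

End MonoidQuotient.

Section HomomorphismRelations.
Context {C : Category} {M : Monoidal C} {K : Type} (S : K -> Monoid M)
  (A : Monoid M) (a : forall k, Hom (carrier (S k)) (carrier A)).

(* [inl k] is the multiplicativity and [inr k] the unit relation for [a k]. *)
Definition hom_rel_dom (r : K + K) : Ob C :=
  match r with inl k => tens M (S k) (S k) | inr _ => I0 M end.

Definition hom_rel_lhs (r : K + K) : Hom (hom_rel_dom r) (carrier A) :=
  match r with inl k => a k ∘ mult (S k) | inr k => a k ∘ unit_ (S k) end.

Definition hom_rel_rhs (r : K + K) : Hom (hom_rel_dom r) (carrier A) :=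
  match r with inl k => mult A ∘ tmap M (a k) (a k) | inr k => unit_ A end.

Lemma coequalizes_hom_rel {B : Monoid M} (g : Hom (carrier A) (carrier B)) :
  IsMonHom A B g ->
  (Coequalizes hom_rel_lhs hom_rel_rhs g <-> forall k, IsMonHom (S k) B (g ∘ a k)).
Proof.
  intros [Hg_mul Hg_unit].
  assert (Hg_a : forall k, g ∘ (mult A ∘ tmap M (a k) (a k))
                           = mult B ∘ tmap M (g ∘ a k) (g ∘ a k)).
  { intro k. rewrite comp_assoc, Hg_mul, <- comp_assoc, <- tmap_comp. reflexivity. }
  split.
  - intros Hco k. split.
    + rewrite <- comp_assoc, <- Hg_a. exact (Hco (inl k)).
    + rewrite <- comp_assoc, <- Hg_unit. exact (Hco (inr k)).
  - intros Hhom [k | k]; simpl.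
    + rewrite Hg_a, comp_assoc. exact (proj1 (Hhom k)).
    + rewrite Hg_unit, comp_assoc. exact (proj2 (Hhom k)).
Qed.

End HomomorphismRelations.

Section FreeMonoidOnColimit.
Context {C : Category} {M : Monoidal C}
  (F : Ob C -> Monoid M) (eta : forall X, Hom X (carrier (F X)))
  (free : IsFreeMonoidFunctor F eta)
  {J : Category} (T : MonDiagram J M)
  (N : Ob C) (phi : forall j, Hom (carrier (T j)) N)
  (colim : IsColimit (UT T) N phi).

Lemma free_colimit_lift (B : Monoid M) (chi : forall j, Hom (carrier (T j)) (carrier B)) :
  IsCocone (UT T) (carrier B) chi ->
  exists g, IsMonHom (F N) B g /\ forall j, g ∘ eta N ∘ phi j = chi j.
Proof.
  intros Hchi.
  destruct (proj2 colim _ chi Hchi) as [c [Hc _]].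
  destruct (free N B c) as [g [[Hg Hgc] _]].
  exists g. split; [exact Hg |]. intro j. rewrite Hgc. apply Hc.
Qed.

Lemma free_colimit_ext (B : Monoid M) (g g' : Hom (carrier (F N)) (carrier B)) :
  IsMonHom (F N) B g -> IsMonHom (F N) B g' ->
  (forall j, g ∘ eta N ∘ phi j = g' ∘ eta N ∘ phi j) -> g = g'.
Proof.
  intros Hg Hg' E.
  assert (E_eta : g ∘ eta N = g' ∘ eta N).
  { destruct (proj2 colim _ (fun j => g ∘ eta N ∘ phi j)) as [c [_ Hc]].
    - intros j k u. simpl. rewrite <- comp_assoc.
      exact (f_equal (fun f => g ∘ eta N ∘ f) (proj1 colim j k u)).
    - rewrite (Hc (g ∘ eta N)), (Hc (g' ∘ eta N)); [reflexivity | |];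
        intro j; [symmetry; apply E | reflexivity]. }
  destruct (free N B (g ∘ eta N)) as [k [_ Hk]].
  rewrite (Hk g), (Hk g'); [reflexivity | |]; split; auto.
Qed.

End FreeMonoidOnColimit.

Theorem theorem4p5 (C : Category) (M : Monoidal C) (B : Braided M)
  (H1 : HasSmallLimits C) (H3 : EpiExtrMonoStructured C)
  (H4 : Cowellpowered C) (H5 : TensorPreservesEpi M)
  (F : Ob C -> Monoid M) (eta : forall X, Hom X (carrier (F X)))
  (H10 : IsFreeMonoidFunctor F eta)
  (J : Category) (T : MonDiagram J M)
  (N : Ob C) (phi : forall j, Hom (carrier (T j)) N)
  (Hcolim : IsColimit (UT T) N phi) :
  exists (P : Monoid M) (pi : Hom (carrier (F N)) (carrier P)),
    IsMonHom (F N) P pi /\ Epi pi /\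
    IsMonColimit T P (fun j => pi ∘ eta N ∘ phi j).
Proof.
  set (a := fun j => eta N ∘ phi j).
  destruct (monoid_quotient M H5 H3 H1 H4 (F N)
              (hom_rel_lhs (fun j => T j) (F N) a) (hom_rel_rhs (fun j => T j) (F N) a))
    as [P [p [Hp [Hp_epi [Hp_co Hp_univ]]]]].
  exists P, p. split; [exact Hp |]. split; [exact Hp_epi |]. split; [split |].
  - intro j. rewrite <- comp_assoc.
    exact (proj1 (coequalizes_hom_rel _ _ a p Hp) Hp_co j).
  - intros j k u. rewrite <- comp_assoc.
    exact (f_equal (fun f => p ∘ eta N ∘ f) (proj1 Hcolim j k u)).
  - intros D chi Hchi Hcocone.
    destruct (free_colimit_lift F eta H10 T N phi Hcolim D chi Hcocone)
      as [g [Hg Hg_chi]].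
    destruct (Hp_univ D g Hg) as [h [Hh Hhp]].
    { apply (coequalizes_hom_rel _ _ a g Hg). intro j.
      unfold a. rewrite comp_assoc, Hg_chi. exact (Hchi j). }
    exists h. split; [split |].
    + exact Hh.
    + intro j. rewrite !comp_assoc, Hhp. apply Hg_chi.
    + intros h' [Hh' Hh'_chi]. apply Hp_epi. rewrite Hhp.
      apply (free_colimit_ext F eta H10 T N phi Hcolim D);
        [apply mon_hom_comp; assumption | exact Hg |].
      intro j. rewrite Hg_chi, <- Hh'_chi, !comp_assoc. reflexivity.
Qed.
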